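(* Let $\lambda_0,\lambda_1>0$, and let $\boldsymbol\alpha_0^\star$ and $\boldsymbol\alpha_1^\star$ be the optimal solutions of the dual problems $\max_{\boldsymbol\alpha\ge\mathbf0}D_{\lambda_0}(\boldsymbol\alpha)$ and $\max_{\boldsymbol\alpha\ge\mathbf0}D_{\lambda_1}(\boldsymbol\alpha)$, respectively. Then $$\Big\|\boldsymbol\alpha_1^\star-\frac{\lambda_0+\lambda_1}{2\lambda_0}\boldsymbol\alpha_0^\star\Big\|_2^2\le\Big\|\frac{\lambda_0-\lambda_1}{2\lambda_0}\boldsymbol\alpha_0^\star\Big\|_2^2.$$
   Context: Let $n,K,p\ge1$ be integers, $[n]=\{1,\dots,n\}$. For each $i\in[n]$ let $\mathbf x_i\in\mathbb R^p$ have nonnegative entries and let $\mathcal D_i,\mathcal S_i\subseteq[n]$ be sets of size $K$. Put $\mathbf c_{ij}=(\mathbf x_i-\mathbf x_j)\circ(\mathbf x_i-\mathbf x_j)$ (entrywise product). Vectors in $\mathbb R^{2nK}$ are indexed by the pairs $(i,l)$, $l\in\mathcal D_i$ (''different-class pairs'') and $(i,j)$, $j\in\mathcal S_i$ (''same-class pairs''). $\mathbf C\in\mathbb R^{p\times2nK}$ has column $\mathbf c_{il}$ for each different-class pair and $-\mathbf c_{ij}$ for each same-class pair. Fix $L\ge U\ge0$, $\eta>0$; let $\mathbf t\in\mathbb R^{2nK}$ have entry $L$ at different-class pairs and $-U$ at same-class pairs; $[z]_+=\max\{z,0\}$ entrywise; $\mathbf 1$ the all-ones vector. For $\lambda>0$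 and $\boldsymbol\alpha\in\mathbb R^{2nK}_{\ge0}$ define $$D_\lambda(\boldsymbol\alpha)=-\frac14\|\boldsymbol\alpha\|_2^2+\mathbf t^\top\boldsymbol\alpha-\frac{\lambda\eta}{2}\|\mathbf m_\lambda(\boldsymbol\alpha)\|_2^2,\qquad\mathbf m_\lambda(\boldsymbol\alpha)=\frac{1}{\lambda\eta}[\mathbf C\boldsymbol\alpha-\lambda\mathbf1]_+.$$ This is the dual of the primal problem $\min_{\mathbf m\ge\mathbf0}\sum_{i}\big[\sum_{l\in\mathcal D_i}([L-\mathbf m^\top\mathbf c_{il}]_+)^2+\sum_{j\in\mathcal S_i}([-U+\mathbf m^\top\mathbf c_{ij}]_+)^2\big]+\lambda(\mathbf m^\top\mathbf1+\frac\eta2\|\mathbf m\|_2^2)$. *)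

From HB Require Import structures.
From mathcomp Require Import all_boot all_order all_algebra.
Set Implicit Arguments. Unset Strict Implicit. Unset Printing Implicit Defensive.
Import Order.TTheory GRing.Theory Num.Theory.
Local Open Scope ring_scope.

(* Index set of R^{2nK}: different-class pairs (i,l), l \in D i, followed by
   same-class pairs (i,j), j \in S i. *)
Definition pidx (n : nat) (D S : 'I_n -> {set 'I_n}) : finType :=
  ({x : 'I_n * 'I_n | x.2 \in D x.1} + {x : 'I_n * 'I_n | x.2 \in S x.1})%type.

Section Dual.
Variables (R : realFieldType) (n p : nat) (D S : 'I_n -> {set 'I_n}).
Variable (x : 'I_n -> 'I_p -> R) (L U eta : R).

Definition cvec (i j : 'I_n) : 'I_p -> R := fun k => (x i k - x j k) ^+ 2.

Definition Ccol (a : pidx D S) : 'I_p -> R :=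
  match a with
  | inl d => cvec (sval d).1 (sval d).2
  | inr s => fun k => - cvec (sval s).1 (sval s).2 k
  end.

Definition Cmul (alpha : pidx D S -> R) : 'I_p -> R :=
  fun k => \sum_(a : pidx D S) Ccol a k * alpha a.

Definition tvec (a : pidx D S) : R :=
  match a with inl _ => L | inr _ => - U end.

Definition sqnorm {I : finType} (v : I -> R) : R := \sum_(a : I) v a ^+ 2.

Definition pos_part (z : R) : R := Num.max z 0.

Definition mvec (lam : R) (alpha : pidx D S -> R) : 'I_p -> R :=
  fun k => (lam * eta)^-1 * pos_part (Cmul alpha k - lam).

Definition Dual (lam : R) (alpha : pidx D S -> R) : R :=
  - (1/4) * sqnorm alpha + \sum_(a : pidx D S) tvec a * alpha a
  - (lam * eta) / 2 * sqnorm (mvec lam alpha).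

Definition dual_optimal (lam : R) (alpha : pidx D S -> R) : Prop :=
  (forall a, 0 <= alpha a) /\
  (forall beta : pidx D S -> R, (forall a, 0 <= beta a) -> Dual lam beta <= Dual lam alpha).

End Dual.

(* D_lam is the concave quadratic -|alpha|^2/4 + t'alpha minus a convex penalty,
   hence 1/2-strongly concave, so its maximizer a over the orthant satisfies
   D_lam(b) + |b - a|^2/4 <= D_lam(a) for every feasible b.
   The penalty is jointly positively homogeneous in (lam, alpha), so testing the
   optimality of alpha_0 at (lam0/lam1) alpha_1 and that of alpha_1 at
   (lam1/lam0) alpha_0, and adding the two inequalities with weights lam1/lam0
   and 1, cancels all penalties.  What remains is
   sum (alpha_1 - alpha_0)(alpha_1 - (lam1/lam0) alpha_0) <= 0, which is the
   claim after completing the square. *)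

From mathcomp Require Import all_boot all_order all_algebra.
From mathcomp Require Import ring lra.
Set Implicit Arguments. Unset Strict Implicit. Unset Printing Implicit Defensive.
Import Order.TTheory GRing.Theory Num.Theory.
Local Open Scope ring_scope.

Section StrongConcavity.
Variables (R : realFieldType) (I : finType).

Definition segment (e : R) (a b : I -> R) : I -> R :=
  fun i => (1 - e) * a i + e * b i.

Definition convex_set (P : (I -> R) -> Prop) : Prop :=
  forall a b e, P a -> P b -> 0 <= e <= 1 -> P (segment e a b).

Definition strongly_concave (m : R) (f : (I -> R) -> R) : Prop :=
  forall a b e, 0 <= e <= 1 ->
  (1 - e) * f a + e * f b + m / 2 * (e * (1 - e)) * sqnorm (fun i => b i - a i)
  <= f (segment e a b).

Lemma nonneg_convex : convex_set (fun a => forall i, 0 <= a i).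
Proof.
move=> a b e a_ge0 b_ge0 /andP[e_ge0 e_le1] i.
by rewrite /segment addr_ge0 // mulr_ge0 // subr_ge0.
Qed.

Lemma le0_of_le_scaled (A B : R) :
  (forall e, 0 < e <= 1 -> A <= e * B) -> A <= 0.
Proof.
move=> hA; rewrite leNgt; apply/negP => A_gt0.
have A_leB : A <= B by rewrite -[B]mul1r hA // ltr01 lexx.
have B_gt0 : 0 < B := lt_le_trans A_gt0 A_leB.
have : A <= A / (2 * B) * B.
  by apply: hA; rewrite divr_gt0 ?mulr_gt0 //= ler_pdivrMr ?mulr_gt0 // mul1r; lra.
have -> : A / (2 * B) * B = A / 2 by field; rewrite gt_eqF.
lra.
Qed.

(* Moving from the maximizer [a] towards [b] by a step [e] and letting [e]
   tend to 0 turns strong concavity into quadratic decay around [a]. *)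
Lemma strongly_concave_max_growth (m : R) (f : (I -> R) -> R) P a :
  0 <= m -> strongly_concave m f -> convex_set P -> P a ->
  (forall b, P b -> f b <= f a) ->
  forall b, P b -> f b + m / 2 * sqnorm (fun i => b i - a i) <= f a.
Proof.
move=> m_ge0 f_conc P_conv Pa a_max b Pb.
set N := sqnorm (fun i => b i - a i).
have N_ge0 : 0 <= N by apply: sumr_ge0 => i _; exact: sqr_ge0.
rewrite -subr_le0 -addrA; apply: (@le0_of_le_scaled _ (m / 2 * N)).
move=> e /andP[e_gt0 e_le1].
have e01 : 0 <= e <= 1 by rewrite (ltW e_gt0).
have := le_trans (f_conc a b e e01) (a_max _ (P_conv a b e Pa Pb e01)).
rewrite -/N -subr_le0.
have -> : (1 - e) * f a + e * f b + m / 2 * (e * (1 - e)) * N - f a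
        = e * (f b + (m / 2 * N - f a) - e * (m / 2 * N)) by ring.
by rewrite pmulr_rle0 // subr_le0.
Qed.

Lemma sqnorm_recentred (lam0 lam1 : R) (al0 al1 : I -> R) : lam0 != 0 ->
  sqnorm (fun i => al1 i - (lam0 + lam1) / (2 * lam0) * al0 i)
  = sqnorm (fun i => (lam0 - lam1) / (2 * lam0) * al0 i)
    + \sum_i (al1 i - al0 i) * (al1 i - lam1 / lam0 * al0 i).
Proof.
move=> lam0_neq0; rewrite /sqnorm -big_split; apply: eq_bigr => i _ /=.
by field.
Qed.

End StrongConcavity.

Section PositivePart.
Variable R : realFieldType.

Lemma pos_part_ge0 (z : R) : 0 <= pos_part z.
Proof. by rewrite /pos_part le_max lexx orbT. Qed.

Lemma pos_part_ge (z : R) : z <= pos_part z.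
Proof. by rewrite /pos_part le_max lexx. Qed.

Lemma pos_partZ (c z : R) : 0 <= c -> pos_part (c * z) = c * pos_part z.
Proof. by move=> c_ge0; rewrite /pos_part maxr_pMr // mulr0. Qed.

Lemma pos_part_sublinear (e a b : R) : 0 <= e <= 1 ->
  pos_part ((1 - e) * a + e * b) <= (1 - e) * pos_part a + e * pos_part b.
Proof.
move=> /andP[e_ge0 e_le1].
have := pos_part_ge a; have := pos_part_ge b.
have := pos_part_ge0 a; have := pos_part_ge0 b.
rewrite /pos_part ge_max; set A := Num.max a 0; set B := Num.max b 0.
move=> B_ge0 A_ge0 b_leB a_leA; apply/andP; split; first by nra.
by apply: addr_ge0; apply: mulr_ge0; lra.
Qed.

Lemma sqr_pos_part_convex (e a b : R) : 0 <= e <= 1 ->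
  pos_part ((1 - e) * a + e * b) ^+ 2
  <= (1 - e) * pos_part a ^+ 2 + e * pos_part b ^+ 2.
Proof.
move=> e01; have /andP[e_ge0 e_le1] := e01.
have := pos_part_sublinear a b e01.
have := pos_part_ge0 ((1 - e) * a + e * b).
have := pos_part_ge0 a; have := pos_part_ge0 b.
set P := pos_part ((1 - e) * a + e * b).
set A := pos_part a; set B := pos_part b.
move=> B_ge0 A_ge0 P_ge0 P_le.
have sqr_convex : ((1 - e) * A + e * B) ^+ 2 <= (1 - e) * A ^+ 2 + e * B ^+ 2.
  rewrite -subr_ge0.
  have -> : (1 - e) * A ^+ 2 + e * B ^+ 2 - ((1 - e) * A + e * B) ^+ 2
          = e * (1 - e) * (A - B) ^+ 2 by ring.
  by rewrite mulr_ge0 ?sqr_ge0 // mulr_ge0 // subr_ge0.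
apply: le_trans sqr_convex; rewrite ler_sqr ?nnegrE //.
by rewrite addr_ge0 // mulr_ge0 // subr_ge0.
Qed.

End PositivePart.

Section DualObjective.
Variables (R : realFieldType) (n p : nat) (D S : 'I_n -> {set 'I_n}).
Variables (x : 'I_n -> 'I_p -> R) (L U eta : R).
Hypothesis eta_gt0 : 0 < eta.

Local Notation I := (pidx D S).

Definition quad (al : I -> R) : R :=
  - (1/4) * sqnorm al + \sum_a tvec L U a * al a.

Definition penalty (lam : R) (al : I -> R) : R :=
  lam * eta / 2 * sqnorm (mvec x eta lam al).

Lemma DualE lam al : Dual x L U eta lam al = quad al - penalty lam al.
Proof. by []. Qed.

Lemma quadE al : quad al = \sum_a (- (1/4) * al a ^+ 2 + tvec L U a * al a).
Proof. by rewrite /quad /sqnorm big_split /= mulr_sumr. Qed.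

Lemma quad_segment e (a b : I -> R) :
  quad (segment e a b)
  = (1 - e) * quad a + e * quad b
    + 1 / 4 * (e * (1 - e)) * sqnorm (fun i => b i - a i).
Proof.
rewrite !quadE /sqnorm !mulr_sumr -!big_split; apply: eq_bigr => i _ /=.
by rewrite /segment; ring.
Qed.

Lemma Cmul_segment e (a b : I -> R) k :
  Cmul x (segment e a b) k = (1 - e) * Cmul x a k + e * Cmul x b k.
Proof.
rewrite /Cmul !mulr_sumr -big_split; apply: eq_bigr => i _ /=.
by rewrite /segment; ring.
Qed.

Lemma CmulZ c (al : I -> R) k :
  Cmul x (fun i => c * al i) k = c * Cmul x al k.
Proof. by rewrite /Cmul mulr_sumr; apply: eq_bigr => i _; ring. Qed.

Lemma penaltyE lam al : 0 < lam ->
  penalty lam al = (2 * lam * eta)^-1 * \sum_k pos_part (Cmul x al k - lam) ^+ 2.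
Proof.
move=> lam_gt0; rewrite /penalty /sqnorm /mvec !mulr_sumr.
by apply: eq_bigr => k _; field; rewrite !gt_eqF.
Qed.

Lemma penalty_convex lam e (a b : I -> R) : 0 < lam -> 0 <= e <= 1 ->
  penalty lam (segment e a b) <= (1 - e) * penalty lam a + e * penalty lam b.
Proof.
move=> lam_gt0 e01; rewrite !penaltyE //; set c := (2 * lam * eta)^-1.
have c_ge0 : 0 <= c by rewrite invr_ge0 !mulr_ge0 ?ltW.
rewrite mulrCA [e * _]mulrCA -mulrDr ler_wpM2l //.
rewrite !mulr_sumr -big_split; apply: ler_sum => k _ /=.
have -> : Cmul x (segment e a b) k - lam
        = (1 - e) * (Cmul x a k - lam) + e * (Cmul x b k - lam).
  by rewrite Cmul_segment; ring.
exact: sqr_pos_part_convex.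
Qed.

Lemma Dual_strongly_concave lam : 0 < lam ->
  strongly_concave (1 / 2) (@Dual R n p D S x L U eta lam).
Proof.
move=> lam_gt0 a b e e01; rewrite !DualE quad_segment.
have := penalty_convex a b lam_gt0 e01.
have -> : 1 / 2 / 2 = 1 / 4 :> R by field.
lra.
Qed.

Lemma penaltyZ c lam al : 0 < c ->
  penalty (c * lam) (fun i => c * al i) = c * penalty lam al.
Proof.
move=> c_gt0; have mvecZ k :
    mvec x eta (c * lam) (fun i => c * al i) k = mvec x eta lam al k.
  rewrite /mvec CmulZ -mulrBr pos_partZ ?ltW // !invfM -!mulrA.
  by rewrite [eta^-1 * _]mulrCA [lam^-1 * _]mulrCA mulKf ?gt_eqF.
rewrite /penalty /sqnorm; under eq_bigr do rewrite mvecZ.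
by rewrite !mulrA.
Qed.

Lemma dual_optimal_growth lam (al : I -> R) :
  0 < lam -> dual_optimal x L U eta lam al ->
  forall b, (forall i, 0 <= b i) ->
  Dual x L U eta lam b + 1 / 4 * sqnorm (fun i => b i - al i)
  <= Dual x L U eta lam al.
Proof.
move=> lam_gt0 [al_ge0 al_max] b b_ge0.
have -> : 1 / 4 = 1 / 2 / 2 :> R by field.
have half_ge0 : 0 <= 1 / 2 :> R by lra.
exact: (strongly_concave_max_growth half_ge0 (Dual_strongly_concave lam_gt0)
          (@nonneg_convex _ _) al_ge0 al_max b_ge0).
Qed.

Lemma quad_cross r (al0 al1 : I -> R) : r != 0 ->
  r * (quad (fun i => r^-1 * al1 i) + 1 / 4 * sqnorm (fun i => r^-1 * al1 i - al0 i)
       - quad al0)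
  + (quad (fun i => r * al0 i) + 1 / 4 * sqnorm (fun i => r * al0 i - al1 i)
     - quad al1)
  = 1 / 2 * \sum_i (al1 i - al0 i) * (al1 i - r * al0 i).
Proof.
move=> r_neq0.
rewrite !quadE /sqnorm !mulr_sumr -!big_split -!sumrB !mulr_sumr -big_split /=.
by apply: eq_bigr => i _; field.
Qed.

Lemma dual_optimal_cross lam0 lam1 (al0 al1 : I -> R) :
  0 < lam0 -> 0 < lam1 ->
  dual_optimal x L U eta lam0 al0 -> dual_optimal x L U eta lam1 al1 ->
  \sum_i (al1 i - al0 i) * (al1 i - lam1 / lam0 * al0 i) <= 0.
Proof.
move=> lam0_gt0 lam1_gt0 opt0 opt1; set r := lam1 / lam0.
have r_gt0 : 0 < r by rewrite divr_gt0.
have rV_gt0 : 0 < r^-1 by rewrite invr_gt0.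
have [al0_ge0 _] := opt0; have [al1_ge0 _] := opt1.
have scaled_ge0 c (al : I -> R) : 0 < c -> (forall i, 0 <= al i) ->
    forall i, 0 <= c * al i by move=> c_gt0 al_ge0 i; rewrite mulr_ge0 ?(ltW c_gt0).
have g0 := dual_optimal_growth lam0_gt0 opt0 (scaled_ge0 _ _ rV_gt0 al1_ge0).
have g1 := dual_optimal_growth lam1_gt0 opt1 (scaled_ge0 _ _ r_gt0 al0_ge0).
have lam0E : lam0 = r^-1 * lam1 by rewrite /r invf_div divfK ?gt_eqF.
have lam1E : lam1 = r * lam0 by rewrite /r divfK ?gt_eqF.
rewrite !DualE [X in penalty X (fun _ => _)]lam0E penaltyZ // in g0.
rewrite !DualE [X in penalty X (fun _ => _)]lam1E penaltyZ // in g1.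
have := quad_cross al0 al1 (lt0r_neq0 r_gt0).
have := ler_wpM2l (ltW r_gt0) g0.
have : r * (r^-1 * penalty lam1 al1) = penalty lam1 al1.
  by rewrite mulrA mulfV ?mul1r ?lt0r_neq0.
lra.
Qed.

End DualObjective.

Theorem theorem2 (R : realFieldType) (n K p : nat) (D S : 'I_n -> {set 'I_n})
  (x : 'I_n -> 'I_p -> R) (L U eta lam0 lam1 : R)
  (alpha0 alpha1 : pidx D S -> R) :
  (1 <= n)%N -> (1 <= K)%N -> (1 <= p)%N ->
  (forall i k, 0 <= x i k) ->
  (forall i, #|D i| = K) -> (forall i, #|S i| = K) ->
  U <= L -> 0 <= U -> 0 < eta ->
  0 < lam0 -> 0 < lam1 ->
  dual_optimal x L U eta lam0 alpha0 ->
  dual_optimal x L U eta lam1 alpha1 ->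
  sqnorm (fun a => alpha1 a - (lam0 + lam1) / (2 * lam0) * alpha0 a)
  <= sqnorm (fun a => (lam0 - lam1) / (2 * lam0) * alpha0 a).
Proof.
move=> _ _ _ _ _ _ _ _ eta_gt0 lam0_gt0 lam1_gt0 opt0 opt1.
rewrite sqnorm_recentred ?gt_eqF // gerDl.
exact (dual_optimal_cross eta_gt0 lam0_gt0 lam1_gt0 opt0 opt1).
Qed.
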